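(* Let $\Sigma_n$ be an empty signature with sorts $S=\{\sigma_1,\dots,\sigma_n\}$, let $\Sigma^n_s$ be the signature with sorts $S$ and a single function symbol $s$ of arity $\sigma_1\to\sigma_1$, let $\mathcal{T}$ be a $\Sigma_n$-theory, and let $\mathcal{T}'$ be the $\Sigma^n_s$-theory axiomatized by $Ax(\mathcal{T})\cup\{\psi_\vee\}$, where $\psi_\vee=\forall x.\,[(s(s(x))=x)\vee(s(s(x))=s(x))]$ with $x$ of sort $\sigma_1$. Then $\mathcal{T}$ has the finite model property with respect to $S$ iff $\mathcal{T}'$ has the finite model property with respect to $S$; and $\mathcal{T}$ is stably finite with respect to $S$ iff $\mathcal{T}'$ is stably finite with respect to $S$.
   Context: An empty signature has no function symbols and only equality predicates (interpreted as identity). A $\Sigma$-interpretation is a structure (nonempty domain $\tau^{\mathcal{A}}$ per sort $\tau$) plus values for variables; a $\Sigma$-theory $\mathcal{T}$ is the class of all $\Sigma$-interpretations satisfying a set $Ax(\mathcal{T})$ of closed formulas (its $\mathcal{T}$-interpretations); $\mathcal{T}$-satisfiable means satisfied by some $\mathcal{T}$-interpretation. Finite model property w.r.t. $S$: every $\mathcal{T}$-satisfiable quantifier-free formula is satisfied by a $\mathcal{T}$-interpretation $\mathcal{A}$ with $\tau^{\mathcal{A}}$ finite for each $\tau\in S$. Stably finite w.r.t. $S$: for every quantifier-free $\phi$ and $\mathcal{T}$-interpretation $\mathcal{A}$ satisfying $\phi$, some $\mathcal{T}$-interpretation $\mathcal{B}$ satisfies $\phi$ with $|\tau^{\mathcal{B}}|$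 finite and $|\tau^{\mathcal{B}}|\le|\tau^{\mathcal{A}}|$ for each $\tau\in S$. *)

(* Many-sorted first-order logic with equality,
   sorts 'I_n.+1 (sigma_1 = ord0), and optionally one unary function symbol
   s : sigma_1 -> sigma_1 (present iff the signature flag b is true). *)
From Stdlib Require List.
From mathcomp Require Import all_boot.
Set Implicit Arguments. Unset Strict Implicit. Unset Printing Implicit Defensive.

Section Syntax.
Variables (n : nat) (b : bool).

Inductive term : 'I_n.+1 -> Type :=
| Tvar (σ : 'I_n.+1) (k : nat) : term σ
| Ts : b -> term ord0 -> term ord0.

Inductive formula : Type :=
| Feq (σ : 'I_n.+1) (t u : term σ)
| Ftrue | Ffalse
| Fnot (φ : formula)
| Fand (φ ψ : formula) | For (φ ψ : formula) | Fimp (φ ψ : formula)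
| Fall (σ : 'I_n.+1) (k : nat) (φ : formula)
| Fex (σ : 'I_n.+1) (k : nat) (φ : formula).

Fixpoint tfree (σ : 'I_n.+1) (k : nat) (τ : 'I_n.+1) (t : term τ) : bool :=
  match t with
  | Tvar τ j => (τ == σ) && (j == k)
  | Ts _ t' => tfree σ k t'
  end.

Fixpoint free (σ : 'I_n.+1) (k : nat) (φ : formula) : bool :=
  match φ with
  | Feq _ t u => tfree σ k t || tfree σ k u
  | Ftrue | Ffalse => false
  | Fnot φ => free σ k φ
  | Fand φ ψ | For φ ψ | Fimp φ ψ => free σ k φ || free σ k ψ
  | Fall τ j φ | Fex τ j φ => ~~ ((τ == σ) && (j == k)) && free σ k φ
  end.

Definition closed_form (φ : formula) : Prop := forall σ k, ~~ free σ k φ.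

Fixpoint qfree (φ : formula) : bool :=
  match φ with
  | Feq _ _ _ | Ftrue | Ffalse => true
  | Fnot φ => qfree φ
  | Fand φ ψ | For φ ψ | Fimp φ ψ => qfree φ && qfree ψ
  | Fall _ _ _ | Fex _ _ _ => false
  end.

(* Interpretations: a nonempty domain per sort, an interpretation of s
   (a function indexed by a proof of b, so it carries no data when b = false,
   i.e. for the empty signature), and values for the variables. *)
Record interp := Interp {
  dom : 'I_n.+1 -> Type;
  dom_ne : forall σ, inhabited (dom σ);
  sI : b -> dom ord0 -> dom ord0;
  val : forall σ, nat -> dom σ }.

Section Eval.
Variables (D : 'I_n.+1 -> Type) (s : b -> D ord0 -> D ord0).

Fixpoint teval (v : forall σ, nat -> D σ) (τ : 'I_n.+1) (t : term τ) : D τ :=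
  match t in term τ return D τ with
  | Tvar τ k => v τ k
  | Ts hb t' => s hb (teval v t')
  end.

Definition upd (v : forall σ, nat -> D σ) (σ : 'I_n.+1) (k : nat) (d : D σ)
  : forall τ, nat -> D τ :=
  fun τ j =>
    match @eqP _ σ τ with
    | ReflectT e => if j == k then eq_rect σ D d τ e else v τ j
    | ReflectF _ => v τ j
    end.

Fixpoint holds (v : forall σ, nat -> D σ) (φ : formula) : Prop :=
  match φ with
  | Feq _ t u => teval v t = teval v u
  | Ftrue => True
  | Ffalse => False
  | Fnot φ => ~ holds v φ
  | Fand φ ψ => holds v φ /\ holds v ψ
  | For φ ψ => holds v φ \/ holds v ψ
  | Fimp φ ψ => holds v φ -> holds v ψ
  | Fall σ k φ => forall d : D σ, holds (upd v k d) φ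
  | Fex σ k φ => exists d : D σ, holds (upd v k d) φ
  end.
End Eval.

Definition sat (A : interp) (φ : formula) : Prop := holds (@sI A) (@val A) φ.

Definition model (Ax : formula -> Prop) (A : interp) : Prop :=
  forall φ, Ax φ -> sat A φ.

Definition finite_type (T : Type) : Prop := exists l : list T, forall x, List.In x l.

Definition card_le (X Y : Type) : Prop := exists f : X -> Y, injective f.

Definition FMP (Ax : formula -> Prop) : Prop :=
  forall φ, qfree φ ->
    (exists A, model Ax A /\ sat A φ) ->
    exists B, model Ax B /\ sat B φ /\ forall σ, finite_type (dom B σ).

Definition stably_finite (Ax : formula -> Prop) : Prop :=
  forall φ, qfree φ -> forall A, model Ax A -> sat A φ ->
    exists B, model Ax B /\ sat B φ /\
      forall σ, finite_type (dom B σ) /\ card_le (dom B σ) (dom A σ).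

End Syntax.

Arguments term : clear implicits.
Arguments Tvar {n b}.
Arguments Ts {n b}.

Fixpoint tlift (n : nat) (τ : 'I_n.+1) (t : term n false τ) : term n true τ :=
  match t in term _ _ τ return term n true τ with
  | Tvar τ k => Tvar τ k
  | Ts _ t' => Ts isT (tlift t')
  end.

Fixpoint flift (n : nat) (φ : formula n false) : formula n true :=
  match φ with
  | Feq _ t u => Feq (tlift t) (tlift u)
  | Ftrue => Ftrue _ _
  | Ffalse => Ffalse _ _
  | Fnot φ => Fnot (flift φ)
  | Fand φ ψ => Fand (flift φ) (flift ψ)
  | For φ ψ => For (flift φ) (flift ψ)
  | Fimp φ ψ => Fimp (flift φ) (flift ψ)
  | Fall σ k φ => Fall σ k (flift φ)
  | Fex σ k φ => Fex σ k (flift φ)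
  end.

Definition psi_or (n : nat) : formula n true :=
  let x : term n true ord0 := Tvar ord0 0 in
  let sx := Ts isT x in
  let ssx := Ts isT sx in
  Fall ord0 0 (For (Feq ssx x) (Feq ssx sx)).

Definition ext_axioms (n : nat) (Ax : formula n false -> Prop) : formula n true -> Prop :=
  fun φ => (exists ψ, Ax ψ /\ φ = flift ψ) \/ φ = psi_or n.

From Pilot Require Import Defs.
From mathcomp Require Import all_boot.
From Stdlib Require Import ClassicalEpsilon.
Set Implicit Arguments. Unset Strict Implicit. Unset Printing Implicit Defensive.

(* Interpreting s as the identity turns a model of T into a model of T' on the
   same domains, and forgetting s turns a model of T' back into one of T; so
   both properties pass from T' to T.  Conversely, a quantifier-free formula
   phi satisfied in a model A of T' is flattened: every term s^d(x_k) becomes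
   a fresh variable of the empty signature, and we add the arrangement that A
   induces on these variables.  The reduct of A satisfies the flattened
   formula, and in any model B of T satisfying it the arrangement lets us
   define s on the values of the flattened terms as A does (and as the
   identity elsewhere), so that phi holds; psi_or survives because s(s(d)) is
   then read off from A.  All constructions keep the domains, so finiteness
   and cardinality bounds carry over. *)

Definition psi_law (X : Type) (f : X -> X) : Prop :=
  forall x, f (f x) = x \/ f (f x) = f x.

Section InducedMap.
Variables (P X Y : Type) (succ : P -> P) (N : P -> Prop).
Variables (f : X -> X) (a : P -> X) (b : P -> Y).
Hypothesis f_psi : psi_law f.
Hypothesis a_succ : forall p, N p -> N (succ p) -> a (succ p) = f (a p).
Hypothesis ab_eq : forall p q, N p -> N q -> a p = a q <-> b p = b q.

Definition induced_map (y : Y) : Y :=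
  match excluded_middle_informative (exists p, (N p /\ N (succ p)) /\ y = b p) with
  | left H => b (succ (proj1_sig (constructive_indefinite_description _ H)))
  | right _ => y
  end.

Lemma induced_map_out y :
  ~ (exists p, (N p /\ N (succ p)) /\ y = b p) -> induced_map y = y.
Proof. by rewrite /induced_map; case: excluded_middle_informative. Qed.

Lemma induced_map_b p : N p -> N (succ p) -> induced_map (b p) = b (succ p).
Proof.
move=> Np Nsp; rewrite /induced_map.
case: excluded_middle_informative => [H|[]]; last by exists p.
case: constructive_indefinite_description => q [[Nq Nsq] /esym/ab_eq Eqp] /=.
by apply/ab_eq => //; rewrite !a_succ // Eqp.
Qed.

Lemma psi_law_induced_map : psi_law induced_map.
Proof.
move=> y.
case: (excluded_middle_informative (exists p, (N p /\ N (succ p)) /\ y = b p))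
  => [[p [[Np Nsp] ->]]|Hy]; last by rewrite !(induced_map_out Hy); left.
rewrite induced_map_b //.
case: (excluded_middle_informative
         (exists q, (N q /\ N (succ q)) /\ b (succ p) = b q))
  => [[q [[Nq Nsq] Eq]]|Hsp]; last by rewrite induced_map_out //; right.
have Eaq : a q = f (a p) by rewrite -a_succ //; apply/ab_eq.
rewrite Eq induced_map_b //.
by case: (f_psi (a p)) => Ha; [left|right]; apply/ab_eq; rewrite ?a_succ // Eaq.
Qed.

End InducedMap.

Lemma psi_law_transfer (P X Y : Type) (succ : P -> P) (N : P -> Prop)
    (f : X -> X) (a : P -> X) (b : P -> Y) :
  psi_law f ->
  (forall p, N p -> N (succ p) -> a (succ p) = f (a p)) ->
  (forall p q, N p -> N q -> a p = a q <-> b p = b q) ->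
  exists g : Y -> Y, psi_law g /\
    forall p, N p -> N (succ p) -> g (b p) = b (succ p).
Proof.
move=> f_psi a_succ ab_eq; exists (induced_map succ N b).
split; first exact: (psi_law_induced_map f_psi a_succ ab_eq).
exact: (induced_map_b a_succ ab_eq).
Qed.

Section Semantics.
Variables (n : nat) (b : bool) (D : 'I_n.+1 -> Type) (s : b -> D ord0 -> D ord0).

Lemma upd_same (v : forall σ, nat -> D σ) σ k (d : D σ) : upd v k d σ k = d.
Proof.
rewrite /upd; case: eqP => [e|//]; rewrite eqxx.
by rewrite (eq_irrelevance e erefl).
Qed.

Lemma teval_agree (v w : forall σ, nat -> D σ) τ (t : term n b τ) :
  (forall σ k, tfree σ k t -> v σ k = w σ k) -> teval s v t = teval s w t.
Proof.
elim: t => [σ k|h t IH] /= vw; first by apply: vw; rewrite /= !eqxx.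
by rewrite IH.
Qed.

Lemma upd_agree (v w : forall σ, nat -> D σ) τ j (d : D τ) (φ : formula n b) :
  (forall σ k, ~~ ((τ == σ) && (j == k)) -> free σ k φ -> v σ k = w σ k) ->
  forall σ k, free σ k φ -> upd v j d σ k = upd w j d σ k.
Proof.
move=> vw σ k fk; rewrite /upd; case: eqP => [e|ne].
  case: ifP => // /negbT jk; apply: vw fk.
  by apply: contra jk => /andP[_ /eqP ->].
by apply: vw fk; apply/negP => /andP[/eqP].
Qed.

Lemma holds_agree (φ : formula n b) (v w : forall σ, nat -> D σ) :
  (forall σ k, free σ k φ -> v σ k = w σ k) -> (holds s v φ <-> holds s w φ).
Proof.
elim: φ v w => [σ t u|||φ IH|φ IH ψ IH'|φ IH ψ IH'|φ IH ψ IH'|τ j φ IH|τ j φ IH]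
  v w /= vw.
- by rewrite (@teval_agree v w _ t) ?(@teval_agree v w _ u) // => σ' k fk;
    apply: vw; rewrite /= fk ?orbT.
- by [].
- by [].
- by rewrite (IH v w).
- by rewrite (IH v w) ?(IH' v w) // => σ k fk; apply: vw; rewrite /= fk ?orbT.
- by rewrite (IH v w) ?(IH' v w) // => σ k fk; apply: vw; rewrite /= fk ?orbT.
- by rewrite (IH v w) ?(IH' v w) // => σ k fk; apply: vw; rewrite /= fk ?orbT.
- have E (d : D τ) : holds s (upd v j d) φ <-> holds s (upd w j d) φ.
    by apply: IH; apply: upd_agree => σ k jk fk; apply: vw; apply/andP.
  by split=> H d; apply/E.
- have E (d : D τ) : holds s (upd v j d) φ <-> holds s (upd w j d) φ.
    by apply: IH; apply: upd_agree => σ k jk fk; apply: vw; apply/andP.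
  by split=> -[d Hd]; exists d; apply/E.
Qed.

Lemma holds_closed (φ : formula n b) (v w : forall σ, nat -> D σ) :
  closed_form φ -> holds s v φ <-> holds s w φ.
Proof. by move=> φc; apply: holds_agree => σ k fk; have := φc σ k; rewrite fk. Qed.

End Semantics.

Section Lift.
Variables (n : nat) (D : 'I_n.+1 -> Type).
Variables (s1 : true -> D ord0 -> D ord0) (s0 : false -> D ord0 -> D ord0).

Lemma teval_tlift v τ (t : term n false τ) : teval s1 v (tlift t) = teval s0 v t.
Proof. by elim: t. Qed.

Lemma holds_flift (φ : formula n false) v : holds s1 v (flift φ) <-> holds s0 v φ.
Proof.
elim: φ v => [σ t u|||φ IH|φ IH ψ IH'|φ IH ψ IH'|φ IH ψ IH'|τ j φ IH|τ j φ IH] v /=;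
  rewrite ?teval_tlift ?IH ?IH' //.
- by split=> H d; apply/IH/H.
- by split=> -[d Hd]; exists d; apply/IH.
Qed.

End Lift.

Lemma qfree_flift n (φ : formula n false) : qfree (flift φ) = qfree φ.
Proof. by elim: φ => //= φ -> ψ ->. Qed.

Lemma holds_psi_or n (D : 'I_n.+1 -> Type) (s : true -> D ord0 -> D ord0) v :
  holds s v (psi_or n) <-> psi_law (s isT).
Proof. by rewrite /psi_or /=; split=> H d; have := H d; rewrite upd_same. Qed.

Section Flattening.
Variable n : nat.

Fixpoint nf σ (t : term n true σ) : nat * nat :=
  match t with
  | Tvar _ k => (k, 0)
  | Ts _ t' => ((nf t').1, (nf t').2.+1)
  end.

Fixpoint subterm_nfs σ (t : term n true σ) : seq (nat * nat) :=
  nf t :: if t is Ts _ t' then subterm_nfs t' else [::].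

Fixpoint nfs (φ : formula n true) : seq (nat * nat) :=
  match φ with
  | Feq _ t u => subterm_nfs t ++ subterm_nfs u
  | Fnot φ => nfs φ
  | Fand φ ψ | For φ ψ | Fimp φ ψ => nfs φ ++ nfs ψ
  | _ => [::]
  end.

(* The variable [pickle (k, d)] stands for the term s^d(x_k). *)
Definition flat_term σ (t : term n true σ) : term n false σ :=
  Tvar σ (pickle (nf t)).

(* Quantifiers are sent to [Ftrue]: only quantifier-free formulas are flattened. *)
Fixpoint flatten (φ : formula n true) : formula n false :=
  match φ with
  | Feq _ t u => Feq (flat_term t) (flat_term u)
  | Ffalse => Ffalse _ _
  | Fnot φ => Fnot (flatten φ)
  | Fand φ ψ => Fand (flatten φ) (flatten ψ)
  | For φ ψ => For (flatten φ) (flatten ψ)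
  | Fimp φ ψ => Fimp (flatten φ) (flatten ψ)
  | _ => Ftrue _ _
  end.

Lemma qfree_flatten φ : qfree (flatten φ).
Proof. by elim: φ => //= φ -> ψ ->. Qed.

Lemma holds_flatten (D : 'I_n.+1 -> Type) (s1 : true -> D ord0 -> D ord0) v1
    (s0 : false -> D ord0 -> D ord0) v0 (N : seq (nat * nat)) :
  (forall σ (t : term n true σ), {subset subterm_nfs t <= N} ->
     teval s1 v1 t = v0 σ (pickle (nf t))) ->
  forall φ, qfree φ -> {subset nfs φ <= N} ->
  (holds s1 v1 φ <-> holds s0 v0 (flatten φ)).
Proof.
move=> Ht; elim=> [σ t u|||φ IH|φ IH ψ IH'|φ IH ψ IH'|φ IH ψ IH'|τ j φ IH|τ j φ IH]
  //= qφ sub.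
- by rewrite !Ht // => x x_t; apply: sub; rewrite mem_cat x_t ?orbT.
- by rewrite IH.
all: case/andP: qφ => q1 q2; rewrite IH ?IH' // => x x_φ;
  by apply: sub; rewrite mem_cat x_φ ?orbT.
Qed.

(* [f] transported to sort [σ] when [σ] is sigma_1, the identity otherwise. *)
Definition s_at (D : 'I_n.+1 -> Type) (f : D ord0 -> D ord0) σ : D σ -> D σ :=
  match @eqP _ ord0 σ with
  | ReflectT e => fun x => eq_rect ord0 D (f (eq_rect σ D x ord0 (esym e))) σ e
  | ReflectF _ => id
  end.

Lemma s_at0 (D : 'I_n.+1 -> Type) (f : D ord0 -> D ord0) : @s_at D f ord0 =1 f.
Proof.
by move=> x; rewrite /s_at; case: eqP => [e|//]; rewrite (eq_irrelevance e erefl).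
Qed.

Definition flat_val (A : interp n true) σ (j : nat) : dom A σ :=
  let p := odflt (0, 0) (unpickle j) in
  iter p.2 (@s_at (dom A) (sI isT) σ) (Defs.val A σ p.1).

Lemma flat_val_succ (A : interp n true) (p : nat * nat) :
  flat_val A ord0 (pickle (p.1, p.2.+1)) = sI isT (flat_val A ord0 (pickle p)).
Proof. by rewrite /flat_val !pickleK /= s_at0. Qed.

Lemma teval_flat (A : interp n true) σ (t : term n true σ) :
  teval (@sI _ _ A) (Defs.val A) t = flat_val A σ (pickle (nf t)).
Proof.
elim: t => [τ k|h t IH] /=; first by rewrite /flat_val pickleK.
by rewrite flat_val_succ -IH (eq_irrelevance h isT).
Qed.

Lemma teval_unflat (B : interp n false) (g : dom B ord0 -> dom B ord0)
    (N : seq (nat * nat)) σ (t : term n true σ) :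
  (forall p, p \in N -> (p.1, p.2.+1) \in N ->
     g (Defs.val B ord0 (pickle p)) = Defs.val B ord0 (pickle (p.1, p.2.+1))) ->
  {subset subterm_nfs t <= N} ->
  teval (fun _ => g) (fun τ k => Defs.val B τ (pickle (k, 0))) t =
  Defs.val B σ (pickle (nf t)).
Proof.
move=> g_N; elim: t => [//|h t IH] sub /=.
have sub_t : {subset subterm_nfs t <= N}.
  by move=> x x_t; apply: sub; rewrite inE x_t orbT.
have nf_t : nf t \in N by apply: sub_t; case: t {IH sub} => *; exact: mem_head.
by rewrite IH // g_N //; apply: sub; exact: mem_head.
Qed.

End Flattening.

Section Arrangement.
Variables (n : nat) (b : bool).

Definition conj_over (X : Type) (g : X -> formula n b) (l : seq X) : formula n b :=
  foldr (fun x acc => Fand (g x) acc) (Ftrue n b) l.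

Lemma qfree_conj_over (X : Type) (g : X -> formula n b) l :
  (forall x, qfree (g x)) -> qfree (conj_over g l).
Proof. by move=> qg; elim: l => //= x l ->; rewrite qg. Qed.

Lemma holds_conj_over D s v (X : eqType) (g : X -> formula n b) l :
  holds (D := D) s v (conj_over g l) <-> forall x, x \in l -> holds s v (g x).
Proof.
elim: l => [//|x l IH] /=; rewrite IH; split=> [[gx gl] y|gl].
  by rewrite inE => /predU1P[->|/gl].
by split=> [|y ly]; apply: gl; rewrite inE ?eqxx ?ly ?orbT.
Qed.

Definition arr_lit (R : nat * nat -> nat * nat -> Prop) (p q : nat * nat) :
    formula n b :=
  let e := Feq (Tvar ord0 (pickle p)) (Tvar ord0 (pickle q)) in
  if excluded_middle_informative (R p q) then e else Fnot e.

Definition arrangement R (N : seq (nat * nat)) : formula n b :=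
  conj_over (fun pq => arr_lit R pq.1 pq.2) [seq (p, q) | p <- N, q <- N].

Lemma qfree_arrangement R N : qfree (arrangement R N).
Proof.
by apply: qfree_conj_over => pq; rewrite /arr_lit; case: excluded_middle_informative.
Qed.

Lemma holds_arr_lit D s v R p q :
  holds (D := D) s v (arr_lit R p q) <->
  (R p q <-> v ord0 (pickle p) = v ord0 (pickle q)).
Proof. by rewrite /arr_lit; case: excluded_middle_informative => /= Rpq; tauto. Qed.

Lemma holds_arrangement D s v R N :
  holds (D := D) s v (arrangement R N) <->
  forall p q, p \in N -> q \in N ->
    (R p q <-> v ord0 (pickle p) = v ord0 (pickle q)).
Proof.
rewrite holds_conj_over; split=> H.
  by move=> p q Np Nq; apply/holds_arr_lit/(H (p, q))/allpairs_f.
by move=> _ /allpairsP[[p q] [Np Nq ->]]; apply/holds_arr_lit/H.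
Qed.

End Arrangement.

Arguments arr_lit {n b}.
Arguments arrangement {n b}.

Section Reduction.
Variables (n : nat) (b b' : bool).
Variables (Ax : formula n b -> Prop) (Ax' : formula n b' -> Prop).

Definition qf_reduces : Prop :=
  forall φ, qfree φ -> forall A, model Ax A -> sat A φ ->
  exists χ, qfree χ /\
    (exists A', model Ax' A' /\ sat A' χ /\ forall σ, dom A' σ = dom A σ) /\
    (forall B', model Ax' B' -> sat B' χ ->
       exists B, model Ax B /\ sat B φ /\ forall σ, dom B σ = dom B' σ).

Hypothesis reduces : qf_reduces.

Lemma FMP_qf_reduces : FMP Ax' -> FMP Ax.
Proof.
move=> fmp φ qφ [A [MA Aφ]].
have [χ [qχ [[A' [MA' [A'χ _]]] lift]]] := reduces qφ MA Aφ.
have [B' [MB' [B'χ finB']]] := fmp χ qχ (ex_intro _ A' (conj MA' A'χ)).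
have [B [MB [Bφ domB]]] := lift B' MB' B'χ.
by exists B; split; [|split] => // σ; rewrite domB.
Qed.

Lemma stably_finite_qf_reduces : stably_finite Ax' -> stably_finite Ax.
Proof.
move=> sfin φ qφ A MA Aφ.
have [χ [qχ [[A' [MA' [A'χ domA']]] lift]]] := reduces qφ MA Aφ.
have [B' [MB' [B'χ finB']]] := sfin χ qχ A' MA' A'χ.
have [B [MB [Bφ domB]]] := lift B' MB' B'χ.
by exists B; split; [|split] => // σ; rewrite domB -(domA' σ).
Qed.

End Reduction.

Section Theories.
Variables (n : nat) (Ax : formula n false -> Prop).
Hypothesis Ax_closed : forall φ, Ax φ -> closed_form φ.

Definition reduct (A : interp n true) (v : forall σ, nat -> dom A σ) :
    interp n false :=
  Interp (@dom_ne _ _ A) (fun _ x => x) v.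

Definition expand (B : interp n false) (g : dom B ord0 -> dom B ord0)
    (v : forall σ, nat -> dom B σ) : interp n true :=
  Interp (@dom_ne _ _ B) (fun _ => g) v.

Arguments reduct : clear implicits.
Arguments expand : clear implicits.

Lemma model_reduct (A : interp n true) (v : forall σ, nat -> dom A σ) :
  model (ext_axioms Ax) A -> model Ax (reduct A v).
Proof.
move=> MA ψ Axψ; rewrite /sat (holds_closed _ _ (Defs.val A) (Ax_closed Axψ)).
by rewrite -(holds_flift (@sI _ _ A)); apply: MA; left; exists ψ.
Qed.

Lemma model_expand (B : interp n false) (g : dom B ord0 -> dom B ord0)
    (v : forall σ, nat -> dom B σ) :
  model Ax B -> psi_law g -> model (ext_axioms Ax) (expand B g v).
Proof.
move=> MB g_psi ψ [[ψ0 [Axψ0 ->]]|->]; last exact/holds_psi_or.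
rewrite /sat (holds_flift _ (@sI _ _ B)).
by rewrite (holds_closed _ _ (Defs.val B) (Ax_closed Axψ0)); apply: MB.
Qed.

Lemma psi_law_model (A : interp n true) :
  model (ext_axioms Ax) A -> psi_law (@sI _ _ A isT).
Proof.
by move=> MA; apply/(holds_psi_or _ (Defs.val A)); apply: (MA (psi_or n)); right.
Qed.

Lemma base_qf_reduces_ext : qf_reduces Ax (ext_axioms Ax).
Proof.
move=> φ qφ A MA Aφ; exists (flift φ); rewrite qfree_flift; split=> //; split.
  exists (expand A id (Defs.val A)).
  split; first by apply: model_expand => // x; left.
  by split=> //; rewrite /sat (holds_flift _ (@sI _ _ A)).
move=> B MB Bφ; exists (reduct B (Defs.val B)); split; first exact: model_reduct.
by split=> //; rewrite /sat -(holds_flift (@sI _ _ B)).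
Qed.

Lemma ext_qf_reduces_base : qf_reduces (ext_axioms Ax) Ax.
Proof.
move=> φ qφ A MA Aφ.
pose a (p : nat * nat) := flat_val A ord0 (pickle p).
have sub : {subset nfs φ <= nfs φ} by [].
exists (Fand (flatten φ) (arrangement (fun p q => a p = a q) (nfs φ))).
split; first by rewrite /= qfree_flatten qfree_arrangement.
split.
  exists (reduct A (flat_val A)); split; first exact: model_reduct.
  split=> //; split; last by apply/holds_arrangement.
  by apply/(holds_flatten _ (fun σ t _ => teval_flat A t) qφ sub).
move=> B MB [Bφ /holds_arrangement Barr].
have [g [g_psi g_N]] := psi_law_transfer (succ := fun p => (p.1, p.2.+1))
  (b := fun p => Defs.val B ord0 (pickle p)) (psi_law_model MA)
  (fun p _ _ => flat_val_succ A p) Barr.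
exists (expand B g (fun σ k => Defs.val B σ (pickle (k, 0)))).
split; first exact: model_expand.
split=> //.
by apply/(holds_flatten (@sI _ _ B) (fun σ t => teval_unflat g_N) qφ sub).
Qed.

End Theories.

Theorem theorem10 (n : nat) (Ax : formula n false -> Prop)
  (Ax_closed : forall φ, Ax φ -> closed_form φ) :
  (FMP Ax <-> FMP (ext_axioms Ax)) /\
  (stably_finite Ax <-> stably_finite (ext_axioms Ax)).
Proof.
have to_ext := base_qf_reduces_ext Ax_closed.
have to_base := ext_qf_reduces_base Ax_closed.
split; split.
- exact: FMP_qf_reduces to_base.
- exact: FMP_qf_reduces to_ext.
- exact: stably_finite_qf_reduces to_base.
- exact: stably_finite_qf_reduces to_ext.
Qed.
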